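(* For every preference profile $P$, every Pareto-optimal assignment is semi-popular, i.e. $\mathit{PO}(P)\subseteq SP(P)$.
   Context: Let $N=\{1,\dots,n\}$ be agents and $H$ a set of $n$ houses. A profile $P=(\succ_1,\dots,\succ_n)$ gives each agent a strict linear order on $H$. An assignment is a bijection $\mu:N\to H$; $M$ is the set of all assignments. Agent $x$ weakly prefers $\mu$ to $\lambda$ if $\mu(x)\succ_x\lambda(x)$ or $\mu(x)=\lambda(x)$, strictly if $\mu(x)\succ_x\lambda(x)$. $N_{\mu,\lambda}$ is the set of agents weakly preferring $\mu$ to $\lambda$; $\mu\succsim\lambda$ if $|N_{\mu,\lambda}|\ge|N_{\lambda,\mu}|$. $\mu$ Pareto-dominates $\lambda$ if all agents weakly prefer $\mu$ to $\lambda$ and some agent strictly; $\mathit{PO}(P)$ is the set of assignments not Pareto-dominated by any assignment. An assignment $\mu$ is semi-popular if $|\{\lambda\in M:\mu\succsim\lambda\}|\ge |M|/2$; $SP(P)$ is the set of semi-popular assignments. *)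

From mathcomp Require Import all_boot.
Set Implicit Arguments. Unset Strict Implicit. Unset Printing Implicit Defensive.

(* Agents: 'I_n.  Houses: a finite type H with #|H| = n.
   A profile assigns to each agent x a relation (P x) on H,
   read "P x h h'" = "agent x strictly prefers h to h'". *)
Definition profile (n : nat) (H : finType) := 'I_n -> rel H.

Definition strict_linear_order (H : finType) (r : rel H) : Prop :=
  [/\ irreflexive r, transitive r & (forall a b, a != b -> r a b || r b a)].

Definition is_profile n (H : finType) (P : profile n H) : Prop :=
  forall x, strict_linear_order (P x).

(* An assignment is a bijection N -> H; since #|N| = #|H| this is an
   injective finite function. *)
Definition assignments n (H : finType) : {set {ffun 'I_n -> H}} :=
  [set mu : {ffun 'I_n -> H} | injectiveb mu].

Section Pop.
Variables (n : nat) (H : finType) (P : profile n H).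

Definition weak_pref (mu la : {ffun 'I_n -> H}) (x : 'I_n) : bool :=
  P x (mu x) (la x) || (mu x == la x).

Definition strict_pref (mu la : {ffun 'I_n -> H}) (x : 'I_n) : bool :=
  P x (mu x) (la x).

Definition N_set (mu la : {ffun 'I_n -> H}) : {set 'I_n} :=
  [set x | weak_pref mu la x].

Definition pop_ge (mu la : {ffun 'I_n -> H}) : bool :=
  #|N_set la mu| <= #|N_set mu la|.

Definition pareto_dominates (mu la : {ffun 'I_n -> H}) : bool :=
  [forall x, weak_pref mu la x] && [exists x, strict_pref mu la x].

Definition PO : {set {ffun 'I_n -> H}} :=
  [set mu in assignments n H |
     [forall la in assignments n H, ~~ pareto_dominates la mu]].

(* |{lambda in M : mu ≿ lambda}| >= |M|/2, stated without division. *)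
Definition SP : {set {ffun 'I_n -> H}} :=
  [set mu in assignments n H |
     #|assignments n H| <= 2 * #|[set la in assignments n H | pop_ge mu la]|].

End Pop.

From mathcomp Require Import all_boot.
From mathcomp Require Import zify fingroup perm.
Set Implicit Arguments. Unset Strict Implicit. Unset Printing Implicit Defensive.

(* Fix a Pareto-optimal assignment mu.  Every assignment is mu \o s for a
   unique permutation s of the agents, and s |-> s^-1 is an involution.  Among
   the agents moved by s, those preferring mu \o s to mu and those preferring
   mu \o s^-1 to mu correspond to disjoint sets: an agent y of the first kind
   with s y of the second kind would make swapping the houses of y and s y a
   Pareto improvement.  Hence if mu loses against mu \o s, the agents
   preferring mu \o s^-1 are fewer than half of the moved agents, and mu wins
   against mu \o s^-1; so mu wins against at least half of all assignments. *)

Lemma cardsU_disjoint (T : finType) (A B : {set T}) :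
  [disjoint A & B] -> #|A :|: B| = #|A| + #|B|.
Proof. by rewrite -setI_eq0 -cardsUI => /eqP->; rewrite cards0 addn0. Qed.

Lemma card_le_twice_of_inj_compl (T : finType) (A : {set T}) (f : T -> T) :
  injective f -> {in ~: A, forall x, f x \in A} -> #|T| <= 2 * #|A|.
Proof.
move=> f_inj fA; rewrite -(cardsC A) mul2n -addnn leq_add2l.
rewrite -(card_imset _ f_inj); apply/subset_leq_card/subsetP.
by move=> _ /imsetP[x xA ->]; exact: fA.
Qed.

Section Preferences.
Variables (n : nat) (H : finType) (P : profile n H).
Hypothesis P_profile : is_profile P.

Lemma pref_irr x h : ~~ P x h h.
Proof. by case: (P_profile x) => irr _ _; rewrite irr. Qed.

Lemma pref_asym x a b : P x a b -> ~~ P x b a.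
Proof.
case: (P_profile x) => _ tr _ Pab; apply/negP => /(tr _ _ _ Pab).
exact/negP/pref_irr.
Qed.

Lemma pref_total x a b : a != b -> P x a b || P x b a.
Proof. by case: (P_profile x) => _ _; apply. Qed.

Lemma card_strict_prefD (mu la : {ffun 'I_n -> H}) :
  #|[set x | strict_pref P la mu x]| + #|[set x | strict_pref P mu la x]|
  = #|[set x | la x != mu x]|.
Proof.
rewrite -cardsU_disjoint.
  apply: eq_card => x; rewrite !inE /strict_pref.
  have [->|ne] := eqVneq (la x) (mu x); first by rewrite (negbTE (pref_irr _ _)).
  exact: pref_total ne.
apply/pred0P => x /=; rewrite !inE /strict_pref.
by apply/negP => /andP[/pref_asym/negP].
Qed.

Lemma card_N_set (mu la : {ffun 'I_n -> H}) :
  #|N_set P mu la| = #|[set x | strict_pref P mu la x]| + #|[set x | mu x == la x]|.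
Proof.
rewrite -cardsU_disjoint.
  by apply: eq_card => x; rewrite !inE.
apply/pred0P => x /=; rewrite !inE /strict_pref.
by apply/negP => /andP[+ /eqP eq_x]; rewrite eq_x (negbTE (pref_irr _ _)).
Qed.

Lemma pop_geE (mu la : {ffun 'I_n -> H}) :
  pop_ge P mu la =
  (#|[set x | strict_pref P la mu x]| <= #|[set x | strict_pref P mu la x]|).
Proof.
rewrite /pop_ge !card_N_set.
have -> : [set x | la x == mu x] = [set x | mu x == la x].
  by apply/setP => x; rewrite !inE eq_sym.
by rewrite leq_add2r.
Qed.

Lemma pop_ge_half (mu la : {ffun 'I_n -> H}) :
  pop_ge P mu la =
  (#|[set x | strict_pref P la mu x]|.*2 <= #|[set x | la x != mu x]|).
Proof. by rewrite pop_geE -card_strict_prefD -addnn leq_add2l. Qed.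

End Preferences.

Section Reassignments.
Variables (n : nat) (H : finType) (mu : {ffun 'I_n -> H}).

Definition reassign (s : {perm 'I_n}) : {ffun 'I_n -> H} := [ffun x => mu (s x)].

Hypothesis mu_inj : injective mu.

Lemma reassign_inj : injective reassign.
Proof.
move=> s t /ffunP st; apply/permP => x.
by apply: mu_inj; move: (st x); rewrite !ffunE.
Qed.

Lemma reassign_assignment s : reassign s \in assignments n H.
Proof.
by rewrite inE; apply/injectiveP => x y; rewrite !ffunE => /mu_inj/perm_inj.
Qed.

Hypothesis card_H : #|H| = n.

Lemma assignments_reassign : assignments n H = [set reassign s | s : {perm 'I_n}].
Proof.
apply/esym/eqP; rewrite eqEcard; apply/andP; split.
  by apply/subsetP => _ /imsetP[s _ ->]; exact: reassign_assignment.
rewrite card_imset ?card_Sn; last exact: reassign_inj.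
by rewrite card_inj_ffuns card_H card_ord ffactnn.
Qed.

Lemma card_assignments : #|assignments n H| = #|{perm 'I_n}|.
Proof. by rewrite assignments_reassign card_imset //; exact: reassign_inj. Qed.

Lemma card_assignments_pred (Q : pred {ffun 'I_n -> H}) :
  #|[set la in assignments n H | Q la]| = #|[set s : {perm 'I_n} | Q (reassign s)]|.
Proof.
rewrite -(card_imset _ reassign_inj) assignments_reassign; apply: eq_card => la.
rewrite !inE; apply/andP/imsetP => [[/imsetP[s _ ->] Qs] | [s]].
  by exists s; rewrite ?inE.
by rewrite inE => Qs ->; split; [apply: imset_f|].
Qed.

End Reassignments.

Section ParetoOptimal.
Variables (n : nat) (H : finType) (P : profile n H) (mu : {ffun 'I_n -> H}).
Hypothesis mu_PO : mu \in PO P.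

Lemma PO_assignment : mu \in assignments n H.
Proof. by move: mu_PO; rewrite inE => /andP[]. Qed.

Lemma PO_inj : injective mu.
Proof. by move: PO_assignment; rewrite inE => /injectiveP. Qed.

Lemma PO_no_swap x y : P x (mu y) (mu x) -> ~~ P y (mu x) (mu y).
Proof.
move=> Px; apply/negP => Py.
have swap_assignment := reassign_assignment PO_inj (tperm x y).
move: mu_PO; rewrite inE => /andP[_ /forall_inP/(_ _ swap_assignment)].
apply/negP/negPn/andP; split.
  apply/forallP => z; rewrite /weak_pref ffunE.
  by case: tpermP => [->|->|_ _]; rewrite ?Px ?Py ?eqxx ?orbT.
by apply/existsP; exists x; rewrite /strict_pref ffunE tpermL.
Qed.

Hypothesis P_profile : is_profile P.

Lemma card_strict_pref_reassignV (s : {perm 'I_n}) :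
  #|[set x | strict_pref P (reassign mu s) mu x]|
  + #|[set x | strict_pref P (reassign mu s^-1%g) mu x]| <= #|[set x | s x != x]|.
Proof.
set A := [set x | _]; set B := [set y | P (s y) (mu y) (mu (s y))].
have -> : #|[set x | strict_pref P (reassign mu s^-1%g) mu x]| = #|B|.
  rewrite -[LHS](card_preimset _ (@perm_inj _ s)).
  by apply: eq_card => y; rewrite !inE /strict_pref ffunE permK.
have AB : [disjoint A & B].
  apply/pred0P => y /=; rewrite !inE /strict_pref ffunE.
  by apply/negP => /andP[/PO_no_swap/negP].
rewrite -cardsU_disjoint //; apply/subset_leq_card/subsetP => y.
rewrite !inE /strict_pref ffunE; apply: contraTneq => ->.
by rewrite orbb (negbTE (pref_irr _ _ _)).
Qed.

Lemma pop_ge_reassignV (s : {perm 'I_n}) :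
  ~~ pop_ge P mu (reassign mu s) -> pop_ge P mu (reassign mu s^-1%g).
Proof.
have moved t : [set x | reassign mu t x != mu x] = [set x | t x != x].
  by apply/setP => x; rewrite !inE ffunE (inj_eq PO_inj).
have movedV : [set x | s^-1%g x != x] = [set x | s x != x].
  apply/setP => x; rewrite !inE; congr negb.
  by apply/eqP/eqP => e; [rewrite -{1}e permKV | rewrite -{1}e permK].
have := card_strict_pref_reassignV s.
rewrite !pop_ge_half // !moved movedV.
(* [set] merges convertible copies of this cardinal, which lia would treat
   as distinct atoms. *)
set d := #|[set x | s x != x]|.
lia.
Qed.

End ParetoOptimal.

Theorem proposition4p2 (n : nat) (H : finType) (P : profile n H) :
  #|H| = n -> is_profile P -> PO P \subset SP P.
Proof.
move=> card_H P_profile; apply/subsetP => mu mu_PO.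
have mu_inj := PO_inj mu_PO.
rewrite inE (PO_assignment mu_PO) /=.
rewrite (card_assignments mu_inj card_H) (card_assignments_pred mu_inj card_H).
apply: (card_le_twice_of_inj_compl (@invg_inj _)) => s.
by rewrite !inE; exact: pop_ge_reassignV.
Qed.
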